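(* Let $k\geq 1$ be an integer and let $B\in M_{4k+3}(\mathbb{F}_2)$ be a non-derogative matrix. Then there exist $N,D\in M_{4k+3}(\mathbb{F}_2)$ with $B=N+D$, $N^2=0$ and $D^4=D$.
   Context: A square matrix is non-derogative if its minimal polynomial equals its characteristic polynomial. $\mathbb{F}_2$ denotes the field with two elements. *)

From mathcomp Require Import all_boot all_algebra.
Set Implicit Arguments. Unset Strict Implicit. Unset Printing Implicit Defensive.
Import GRing.Theory.
Local Open Scope ring_scope.

Definition nonderogative (F : fieldType) (n : nat) (A : 'M[F]_n.+1) : bool :=
  mxminpoly A == char_poly A.

(* A non-derogative B has a cyclic vector y: its annihilator is the whole
   minimal polynomial, of degree n + 1.  Such a vector exists over any field,
   by repeatedly combining two vectors into one whose annihilator is a common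
   multiple of theirs.  With phi = X^2 + X + 1, the vectors
   w_(2i) = y phi(B)^i and w_(2i+1) = y B phi(B)^i form a basis, in which
     w_(2i) B = w_(2i+1),   w_(2i+1) B = w_(2i+2) - w_(2i) - w_(2i+1).
   Let N map w_(2i+1) to w_(2i+2) and kill the w_(2i); since n is even the
   last vector w_n has even index, so N^2 = 0.  Then D = B - N acts on each
   pair (w_(2i), w_(2i+1)) as the companion matrix of phi, so phi(D) kills
   w_0, ..., w_(n-1), while modulo their span D acts on w_n as a scalar a with
   a^2 = a.  Hence D^4 - D = D (D - 1) phi(D) vanishes on the whole basis. *)

From mathcomp Require Import all_boot all_algebra.
From mathcomp Require Import zify ring.
From Stdlib Require Import Classical.
Set Implicit Arguments. Unset Strict Implicit. Unset Printing Implicit Defensive.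
Import GRing.Theory.
Local Open Scope ring_scope.

Section Polynomials.
Variable F : fieldType.
Implicit Types p q d : {poly F}.

Lemma ex_minsize_poly (P : {poly F} -> Prop) p :
  P p -> exists2 q, P q & forall r, P r -> (size q <= size r)%N.
Proof.
elim: (size p).+1 {-2}p (ltnSn (size p)) => [//|m IH] {}p sp Pp.
have [[r [Pr srp]] | small] := classic (exists r, P r /\ (size r < size p)%N).
  exact: IH r (leq_trans srp sp) Pr.
exists p => // r Pr; rewrite leqNgt; apply/negP => srp.
by apply: small; exists r.
Qed.

Lemma irredp_factor_exists p :
  (1 < size p)%N -> exists2 q, irreducible_poly q & q %| p.
Proof.
move=> sp; have [q [sq qp] qmin] :=
  ex_minsize_poly (P := fun d => (1 < size d)%N /\ d %| p) (conj sp (dvdpp p)).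
have q0 : q != 0 by rewrite -size_poly_gt0 ltnW.
exists q => //; split=> // d sd dq.
have d0 : d != 0 by apply: contraNneq q0 => d0; rewrite -dvd0p -d0.
have sd1 : (1 < size d)%N.
  by move: sd d0; rewrite -size_poly_gt0; case: (size d) => [|[]].
rewrite -dvdp_size_eqp // eqn_leq (dvdp_leq q0 dq) /=.
exact: qmin (conj sd1 (dvdp_trans dq qp)).
Qed.

Lemma irredp_coprimep q d :
  irreducible_poly q -> ~~ (q %| d) -> coprimep q d.
Proof.
move=> iq qNd; apply: contraT => /(iq _) gq.
by move: qNd; rewrite -(eqp_dvdl _ (gq (dvdp_gcdl q d))) dvdp_gcdr.
Qed.

Lemma dvdp_exp_irredp q N d :
  irreducible_poly q -> d %| q ^+ N -> exists j, d %= q ^+ j.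
Proof.
move=> iq; elim: N d => [|N IH] d.
  by rewrite expr0 dvdp1 size_poly_eq1 => d1; exists 0%N; rewrite expr0.
rewrite exprSr; have [qd | qNd] := boolP (q %| d).
  rewrite -(divpK qd) dvdp_mul2r ?irredp_neq0 // => /IH[j dj].
  by exists j.+1; rewrite exprSr eqp_mul2r ?irredp_neq0.
by rewrite Gauss_dvdpl 1?coprimep_sym ?irredp_coprimep //; apply: IH.
Qed.

Lemma dvdp_exp_irredp_total q N M d e :
  irreducible_poly q -> d %| q ^+ N -> e %| q ^+ M -> (d %| e) || (e %| d).
Proof.
move=> iq /(dvdp_exp_irredp iq)[i di] /(dvdp_exp_irredp iq)[j ej].
rewrite (eqp_dvdl _ di) (eqp_dvdr _ ej) (eqp_dvdl _ ej) (eqp_dvdr _ di).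
by case: (leqP i j) => ij;
  [rewrite (dvdp_exp2l q ij) | rewrite (dvdp_exp2l q (ltnW ij)) orbT].
Qed.

Lemma triangular_comb_eq0 (f : nat -> {poly F}) (c : nat -> F) m :
  (forall i, size (f i) = i.+1) ->
  \sum_(i < m) c i *: f i = 0 -> forall i, (i < m)%N -> c i = 0.
Proof.
move=> sf; elim: m => // m IH; rewrite big_ord_recr /= => e.
have cm : c m = 0.
  have /eqP := congr1 (coefp m) e.
  rewrite /= coef0 coefD coefZ coef_sum big1 ?add0r => [|i _]; last first.
    by rewrite coefZ nth_default ?mulr0 // sf.
  have lm : (f m)`_m != 0.
    have := lead_coef_eq0 (f m); rewrite lead_coefE sf /= => ->.
    by rewrite -size_poly_eq0 sf.
  by rewrite mulf_eq0 (negPf lm) orbF => /eqP.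
move: e; rewrite cm scale0r addr0 => /IH cm0 i.
by rewrite ltnS leq_eqVlt => /predU1P[-> | /cm0].
Qed.

End Polynomials.

Section Annihilator.
Variables (F : fieldType) (n : nat) (B : 'M[F]_n.+1).
Implicit Types (u v w : 'rV[F]_n.+1) (a b c f : {poly F}).

Definition ann u a := forall f, (u *m horner_mx B f == 0) = (a %| f).

Lemma horner_mx_mul f g :
  horner_mx B (f * g) = horner_mx B f *m horner_mx B g.
Proof. by rewrite rmorphM mulmxE. Qed.

Lemma horner_mx_dvdp_eq0 u c f :
  u *m horner_mx B c = 0 -> c %| f -> u *m horner_mx B f = 0.
Proof. by move=> uc /dvdpP[g ->]; rewrite mulrC horner_mx_mul mulmxA uc mul0mx. Qed.

Lemma ann_root u a : ann u a -> u *m horner_mx B a = 0.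
Proof. by move=> ha; apply/eqP; rewrite ha. Qed.

Lemma ann_neq0 u a : ann u a -> a != 0.
Proof.
move=> ha; have := ha (mxminpoly B); rewrite mx_root_minpoly mulmx0 eqxx.
move=> /esym; apply: contraTneq => ->.
by rewrite dvd0p -size_poly_eq0 size_mxminpoly.
Qed.

Lemma ann_exists u : exists a, ann u a.
Proof.
have mB0 : mxminpoly B != 0 by rewrite -size_poly_eq0 size_mxminpoly.
have [a [a0 ua] amin] := ex_minsize_poly
  (P := fun f => f != 0 /\ u *m horner_mx B f = 0)
  (conj mB0 (etrans (congr1 _ (mx_root_minpoly B)) (mulmx0 _ _))).
exists a => f; apply/eqP/idP => [uf | /(horner_mx_dvdp_eq0 ua)//].
have ur : u *m horner_mx B (f %% a) = 0.
  move: uf; rewrite {1}(divp_eq f a) rmorphD mulmxDr.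
  by rewrite (horner_mx_dvdp_eq0 ua (dvdp_mull _ (dvdpp a))) add0r.
apply/modp_eq0P/eqP; apply: contraT => r0.
by have := amin _ (conj r0 ur); rewrite leqNgt ltn_modpN0.
Qed.

Lemma ann_mul u c e : ann u (c * e) -> e != 0 -> ann (u *m horner_mx B e) c.
Proof.
by move=> h e0 f; rewrite -mulmxA -horner_mx_mul h [e * f]mulrC dvdp_mul2r.
Qed.

Lemma ann_add_coprime u w a b :
  ann u a -> ann w b -> coprimep a b -> ann (u + w) (a * b).
Proof.
have half u' w' a' b' f : ann u' a' -> ann w' b' -> coprimep a' b' ->
    (u' + w') *m horner_mx B f = 0 -> a' %| f.
  move=> ha hb cab uwf; rewrite -(Gauss_dvdpl _ cab) -ha.
  rewrite -[u'](addrK w') mulmxBl.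
  rewrite (horner_mx_dvdp_eq0 (ann_root hb) (dvdp_mulIr f b')) subr0.
  by rewrite horner_mx_mul mulmxA uwf mul0mx.
move=> ha hb cab f; apply/eqP/idP => [uwf | ].
  rewrite Gauss_dvdp // (half _ _ _ _ _ ha hb) //=.
  by apply: (half _ _ _ _ _ hb ha); rewrite 1?coprimep_sym // addrC.
rewrite Gauss_dvdp // => /andP[af bf].
rewrite mulmxDl (horner_mx_dvdp_eq0 (ann_root ha) af).
by rewrite (horner_mx_dvdp_eq0 (ann_root hb) bf) addr0.
Qed.

Lemma ann_lcm_primary u w a b q m :
  irreducible_poly q -> b %| q ^+ m -> ann u a -> ann w b ->
  exists v c, [/\ ann v c, a %| c & b %| c].
Proof.
move=> iq bq ha hb; have a0 := ann_neq0 ha; have q0 := irredp_neq0 iq.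
set a2 := gdcop q a; set a1 := a %/ a2.
have a2_0 : a2 != 0 by apply: dvdpN0 (dvdp_gdco q a) a0.
have ea : a = a1 * a2 by rewrite divpK // dvdp_gdco.
have a1q : a1 %| q ^+ size a.
  by rewrite -(@dvdp_mul2r _ a2) // -ea mulrC dvdp_gdcor.
have [a1b | ba1] := orP (dvdp_exp_irredp_total iq a1q bq); last first.
  by exists u, a; split=> //; apply: dvdp_trans ba1 _; rewrite ea dvdp_mulIl.
have a2b : coprimep a2 b.
  exact: coprimep_dvdl bq (coprimep_expr _ (coprimep_gdco q a0)).
have a1_0 : a1 != 0 by apply: contraNneq a0 => a1_0; rewrite ea a1_0 mul0r.
have ha2 : ann (u *m horner_mx B a1) a2.
  by apply: ann_mul => //; rewrite mulrC -ea.
exists (u *m horner_mx B a1 + w), (a2 * b); split.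
- exact: ann_add_coprime.
- by rewrite {1}ea mulrC dvdp_mul2l.
- exact: dvdp_mulIr.
Qed.

Lemma ann_lcm u w a b :
  ann u a -> ann w b -> exists v c, [/\ ann v c, a %| c & b %| c].
Proof.
elim: (size b).+1 {-2}b (ltnSn (size b)) u w a => [//|m IH] {}b sb u w a ha hb.
(* Split b = s * r into a q-primary part s, handled by [ann_lcm_primary],
   and a coprime part r of smaller size, handled by induction. *)
have b0 := ann_neq0 hb.
have [b1 | /irredp_factor_exists[q iq qb]] := leqP (size b) 1.
  exists u, a; split=> //; apply: dvdUp.
  by rewrite -size_poly_eq1 eqn_leq b1 size_poly_gt0.
have q0 := irredp_neq0 iq.
set r := gdcop q b; set s := b %/ r.
have r0 : r != 0 by apply: dvdpN0 (dvdp_gdco q b) b0.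
have ebsr : b = s * r by rewrite divpK // dvdp_gdco.
have s0 : s != 0 by apply: contraNneq b0 => s0; rewrite ebsr s0 mul0r.
have sq : s %| q ^+ size b.
  by rewrite -(@dvdp_mul2r _ r) // -ebsr mulrC dvdp_gdcor.
have cqr : coprimep q r by rewrite coprimep_sym coprimep_gdco.
have csr : coprimep s r := coprimep_dvdr sq (coprimep_expl _ cqr).
have ss : (1 < size s)%N.
  have qs : q %| s by rewrite -(Gauss_dvdpl _ cqr) -ebsr.
  exact: leq_trans iq.1 (dvdp_leq s0 qs).
have sr : (size r < m)%N.
  have := size_mul s0 r0; rewrite -ebsr -subn1; rewrite -size_poly_gt0 in r0.
  by move: sb ss r0; move: (size b) (size s) (size r) => x y z; lia.
have hsr : ann w (s * r) by rewrite -ebsr.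
have hrs : ann w (r * s) by rewrite mulrC -ebsr.
have [v1 [c1 [h1 ac1 sc1]]] := ann_lcm_primary iq sq ha (ann_mul hsr r0).
have [v2 [c2 [h2 c12 rc2]]] := IH r sr v1 _ c1 h1 (ann_mul hrs s0).
exists v2, c2; split => //; first exact: dvdp_trans ac1 c12.
by rewrite ebsr Gauss_dvdp // rc2 (dvdp_trans sc1 c12).
Qed.

Lemma ann_common_multiple (s : seq 'rV[F]_n.+1) :
  exists y c, ann y c /\ {in s, forall u, u *m horner_mx B c = 0}.
Proof.
elim: s => [|u s [y [c [hc kill]]]].
  by exists 0, 1; split=> // f; rewrite mul0mx eqxx dvd1p.
have [a ha] := ann_exists u.
have [v [c' [hc' cc' ac']]] := ann_lcm hc ha.
exists v, c'; split=> // x; rewrite inE => /predU1P[-> | xs].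
  exact: horner_mx_dvdp_eq0 (ann_root ha) ac'.
exact: horner_mx_dvdp_eq0 (kill x xs) cc'.
Qed.

Theorem cyclic_vector_exists : exists y, ann y (mxminpoly B).
Proof.
have [y [c [hc kill]]] := ann_common_multiple [seq delta_mx 0 j | j <- enum 'I_n.+1].
have Bc0 : horner_mx B c = 0.
  apply/row_matrixP => j; rewrite row0 rowE kill //.
  by apply: map_f; rewrite mem_enum.
have c_minpoly : c %= mxminpoly B.
  by rewrite /eqp mxminpoly_min // andbT -hc mx_root_minpoly mulmx0.
by exists y => f; rewrite hc (eqp_dvdl _ c_minpoly).
Qed.

End Annihilator.

Lemma mulmx_rows_eq0 (R : comUnitRingType) m p (P : 'M[R]_m) (X : 'M[R]_(m, p)) :
  P \in unitmx -> (forall i, row i P *m X = 0) -> X = 0.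
Proof.
move=> Pu rowsX; rewrite -(mulKmx Pu X).
suff -> : P *m X = 0 by rewrite mulmx0.
by apply/row_matrixP => i; rewrite row0 row_mul rowsX.
Qed.

Lemma mulr_F2 (a : 'F_2) : a * a = a.
Proof. by case: a => -[|[|//]] ?; apply: val_inj. Qed.

Definition phi3 : {poly 'F_2} := 'X^2 + 'X + 1.

Definition basis_poly (j : nat) : {poly 'F_2} := 'X ^+ odd j * phi3 ^+ j./2.

Lemma monic_phi3 : phi3 \is monic.
Proof.
rewrite monicE /phi3 -addrA lead_coefDl ?lead_coefXn //.
by rewrite size_polyXn -polyC1 size_XaddC.
Qed.

Lemma size_phi3 : size phi3 = 3%N.
Proof. by rewrite /phi3 -addrA size_polyDl size_polyXn // -polyC1 size_XaddC. Qed.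

Lemma size_basis_poly j : size (basis_poly j) = j.+1.
Proof.
have phi3X_monic : phi3 ^+ j./2 \is monic by rewrite monic_exp // monic_phi3.
have := size_exp phi3 j./2; have := odd_double_half j.
have := monic_neq0 phi3X_monic; rewrite -size_poly_gt0.
rewrite /basis_poly size_monicM ?monicXn ?monic_neq0 // size_polyXn size_phi3.
rewrite -!subn1 -!muln2; move: (size _) => s; move: (j./2) => h.
by case: (odd j) => /=; lia.
Qed.

Lemma basis_poly_even i : basis_poly i.*2 * 'X = basis_poly i.*2.+1.
Proof.
by rewrite /basis_poly /= odd_double uphalf_double half_double expr0 mul1r mulrC.
Qed.

Lemma basis_poly_odd i : basis_poly i.*2.+1 * 'X =
  basis_poly i.*2.+2 - basis_poly i.*2 - basis_poly i.*2.+1.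
Proof.
rewrite /basis_poly /= odd_double uphalf_double half_double [phi3 ^+ _.+1]exprS.
by move: (phi3 ^+ i) => t; rewrite /phi3; ring.
Qed.

Section Decomposition.
Variables (n : nat) (B : 'M['F_2]_n.+1) (y : 'rV['F_2]_n.+1).
Hypotheses (n_even : ~~ odd n) (y_cyclic : ann B y (mxminpoly B))
  (size_minpoly : size (mxminpoly B) = n.+2).

Let w j := y *m horner_mx B (basis_poly j).
Let P := \matrix_(i < n.+1) w i.

Lemma w_mulB j : w j *m B = y *m horner_mx B (basis_poly j * 'X).
Proof. by rewrite horner_mx_mul horner_mx_X mulmxA. Qed.

Lemma w_mulB_even i : w i.*2 *m B = w i.*2.+1.
Proof. by rewrite w_mulB basis_poly_even. Qed.

Lemma w_mulB_odd i : w i.*2.+1 *m B = w i.*2.+2 - w i.*2 - w i.*2.+1.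
Proof. by rewrite w_mulB basis_poly_odd !rmorphB !mulmxBr. Qed.

Lemma P_unit : P \in unitmx.
Proof.
rewrite -row_free_unit; apply/inj_row_free => c cP0; apply/rowP => i.
set g := \sum_(j < n.+1) c 0 (inord j) *: basis_poly j.
have yg0 : y *m horner_mx B g = 0.
  rewrite -cP0 [c *m P]mulmx_sum_row /g rmorph_sum mulmx_sumr.
  apply: eq_bigr => j _.
  by rewrite rowK /w scalemxAr -(horner_mxZ B) inord_val.
have size_g : (size g <= n.+1)%N.
  apply: leq_trans (size_sum _ _ _) _; apply/bigmax_leqP => j _.
  by rewrite (leq_trans (size_scale_leq _ _)) // size_basis_poly.
have g0 : g = 0.
  apply: contraTeq size_g => g0; rewrite -ltnNge -size_minpoly.
  by apply: dvdp_leq g0 _; rewrite -y_cyclic yg0.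
have := triangular_comb_eq0 (c := fun j => c 0 (inord j)) size_basis_poly g0.
by move=> /(_ i (ltn_ord i)); rewrite inord_val mxE.
Qed.

Lemma w_basis_eq0 (X : 'M['F_2]_n.+1) :
  (forall j, (j < n.+1)%N -> w j *m X = 0) -> X = 0.
Proof. by move=> wX; apply: (mulmx_rows_eq0 P_unit) => i; rewrite rowK wX. Qed.

Let N := invmx P *m \matrix_(i < n.+1) (if odd i then w i.+1 else 0).
Let D := B - N.
Let Q := horner_mx D phi3.

Lemma w_mulN j : (j < n.+1)%N -> w j *m N = if odd j then w j.+1 else 0.
Proof.
move=> lt_jn; have -> : w j = row (Ordinal lt_jn) P by rewrite rowK.
by rewrite -row_mul mulmxA mulmxV ?P_unit // mul1mx rowK.
Qed.

Lemma N_sqr : N *m N = 0.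
Proof.
apply: w_basis_eq0 => j lt_jn; rewrite mulmxA w_mulN //.
case: ifP => odd_j; last by rewrite mul0mx.
have lt_j1n : (j.+1 < n.+1)%N.
  rewrite ltnS ltn_neqAle -ltnS lt_jn andbT.
  by apply: contraNneq n_even => <-; rewrite odd_j.
by rewrite w_mulN //= odd_j.
Qed.

Lemma w_mulD_even i : (i.*2 < n.+1)%N -> w i.*2 *m D = w i.*2.+1.
Proof. by move=> lt_in; rewrite mulmxBr w_mulN // odd_double subr0 w_mulB_even. Qed.

Lemma w_mulD_odd i :
  (i.*2.+1 < n.+1)%N -> w i.*2.+1 *m D = - w i.*2 - w i.*2.+1.
Proof.
move=> lt_in; rewrite mulmxBr w_mulN //= odd_double /= w_mulB_odd.
by rewrite addrAC (addrAC (w _)) subrr add0r.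
Qed.

Lemma mulmx_Q (v : 'rV['F_2]_n.+1) : v *m Q = v *m D *m D + v *m D + v.
Proof.
rewrite /Q /phi3 !rmorphD /= rmorphXn /= horner_mx_X rmorph1 expr2 -mulmxE.
by rewrite -idmxE mulmxDr [v *m (_ *m _ + D)]mulmxDr mulmxA mulmx1.
Qed.

Lemma w_mulQ j : (j < n)%N -> w j *m Q = 0.
Proof.
rewrite mulmx_Q -[j]odd_double_half; case: (odd j); move: (j./2) => i /=.
  rewrite add1n => /ltnW lt_i21n; have lt_i2n := ltnW lt_i21n.
  rewrite w_mulD_odd // mulmxBl mulNmx w_mulD_even // w_mulD_odd //.
  by rewrite opprB opprK addKr addNKr addNr.
rewrite add0n => lt_i21n; have lt_i2n := ltnW lt_i21n.
by rewrite w_mulD_even // w_mulD_odd // addrNK addNr.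
Qed.

Lemma D_mulQ : D *m Q = Q *m D.
Proof. by have := comm_horner_mx2 D 'X phi3; rewrite horner_mx_X. Qed.

Let H := horner_mx D ('X * ('X - 1)).

(* Modulo the span of w_0, ..., w_(n-1), which Q kills, D acts on w_n as the
   scalar a below; H = D (D - 1) then maps w_n into that span as a^2 = a. *)
Lemma w_last_mulHQ : w n *m H *m Q = 0.
Proof.
set u := w n *m D; pose c := u *m invmx P.
have u_expand :
    u = \sum_(j < n) c 0 (widen_ord (leqnSn n) j) *: w j + c 0 ord_max *: w n.
  rewrite -[u](mulmxKV P_unit) -/c mulmx_sum_row big_ord_recr /=.
  by congr (_ + _); [apply: eq_bigr => j _|]; rewrite rowK.
move: u_expand; set u' := \sum_(j < n) _; set a := c 0 ord_max => u_expand.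
have u'Q : u' *m Q = 0.
  by rewrite /u' mulmx_suml big1 // => j _; rewrite -scalemxAl w_mulQ ?scaler0.
have wnH : w n *m H = u' *m D - u' + a *: u'.
  rewrite /H horner_mx_mul rmorphB /= horner_mx_X rmorph1 mulmxA -/u.
  rewrite -idmxE mulmxBr mulmx1 {1}u_expand mulmxDl -scalemxAl -/u u_expand.
  by rewrite scalerDr scalerA mulr_F2 opprD !addrA addrAC addrK addrAC.
rewrite wnH mulmxDl mulmxBl -scalemxAl u'Q scaler0 addr0.
by rewrite -mulmxA D_mulQ mulmxA u'Q mul0mx subrr.
Qed.

Lemma D_quartic : D ^+ 4 = D.
Proof.
apply/eqP; rewrite -subr_eq0; apply/eqP.
have -> : D ^+ 4 - D = H *m Q.
  have XXphi3 : 'X * ('X - 1) * phi3 = 'X^4 - 'X by rewrite /phi3; ring.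
  by rewrite /H /Q -horner_mx_mul XXphi3 rmorphB /= rmorphXn /= horner_mx_X.
apply: w_basis_eq0 => j; rewrite ltnS leq_eqVlt => /predU1P[-> | lt_jn].
  by rewrite mulmxA w_last_mulHQ.
by rewrite [H *m Q]comm_horner_mx2 mulmxA w_mulQ // mul0mx.
Qed.

Lemma cyclic_decomposition :
  exists N D : 'M['F_2]_n.+1, [/\ B = N + D, N *m N = 0 & D ^+ 4 = D].
Proof. by exists N, D; rewrite addrC subrK N_sqr D_quartic. Qed.

End Decomposition.

Theorem nonderogative_decomposition n (B : 'M['F_2]_n.+1) :
  ~~ odd n -> nonderogative B ->
  exists N D : 'M['F_2]_n.+1, [/\ B = N + D, N *m N = 0 & D ^+ 4 = D].
Proof.
move=> n_even /eqP minpoly_char; have [y y_cyclic] := cyclic_vector_exists B.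
apply: cyclic_decomposition n_even y_cyclic _.
by rewrite minpoly_char size_char_poly.
Qed.

Theorem corollary2p14 (k : nat) (hk : (1 <= k)%N)
    (B : 'M['F_2]_((4 * k + 2).+1)) :
  nonderogative B ->
  exists N D : 'M['F_2]_((4 * k + 2).+1),
    [/\ B = N + D, N *m N = 0 & D ^+ 4 = D].
Proof. by apply: nonderogative_decomposition; rewrite oddD oddM. Qed.
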